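(* Let $(G,\oplus)$ be a gyrogroup and let $S\subseteq G\setminus\{e\}$ be symmetric. (1) If $\mathrm{gyr}[g,s](S)=S$ for all $s\in S$ and $g\in G$, then the R-Cayley graph $\mathrm{RCay}(G,S)$ is undirected. (2) Conversely, if $\mathrm{RCay}(G,S)$ is undirected, then $\mathrm{gyr}[g,s](s)\in S$ for all $g\in G$ and $s\in S$.
   Context: A gyrogroup is a nonempty set $G$ with a binary operation $\oplus$ such that: (i) there is a unique $e\in G$ with $e\oplus x=x=x\oplus e$ for all $x$; (ii) each $x\in G$ has a unique inverse $\ominus x$ with $\ominus x\oplus x=e=x\oplus(\ominus x)$; (iii) for all $x,y\in G$ there is an automorphism $\mathrm{gyr}[x,y]$ of $(G,\oplus)$ with $x\oplus(y\oplus z)=(x\oplus y)\oplus \mathrm{gyr}[x,y](z)$ for all $z\in G$; (iv) $\mathrm{gyr}[x\oplus y,y]=\mathrm{gyr}[x,y]$ for all $x,y$. A subset $S\subseteq G$ is symmetric if $\ominus s\in S$ for every $s\in S$. For $S\subseteq G$ with $e\notin S$, the R-Cayley graph $\mathrm{RCay}(G,S)$ is the directed graph with vertex set $G$ and a directed edge $u\to v$ iff $v=u\oplus s$ for some $s\in S$. The graph is undirected if whenever $u\to v$ is an edge, $v\to u$ is also an edge. *)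

Record gyrogroup := Gyrogroup {
  carrier :> Type;
  gop : carrier -> carrier -> carrier;
  gid : carrier;
  ginv : carrier -> carrier;
  gyr : carrier -> carrier -> carrier -> carrier;
  gid_l : forall x, gop gid x = x;
  gid_r : forall x, gop x gid = x;
  gid_unique : forall e', (forall x, gop e' x = x /\ gop x e' = x) -> e' = gid;
  ginv_l : forall x, gop (ginv x) x = gid;
  ginv_r : forall x, gop x (ginv x) = gid;
  ginv_unique : forall x y, gop y x = gid -> gop x y = gid -> y = ginv x;
  gyr_morph : forall x y a b, gyr x y (gop a b) = gop (gyr x y a) (gyr x y b);
  gyr_inj : forall x y a b, gyr x y a = gyr x y b -> a = b;
  gyr_surj : forall x y b, exists a, gyr x y a = b;
  gyr_assoc : forall x y z, gop x (gop y z) = gop (gop x y) (gyr x y z);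
  gyr_loop : forall x y, gyr (gop x y) y = gyr x y
}.

Arguments gop {G} : rename.
Arguments gid {G} : rename.
Arguments ginv {G} : rename.
Arguments gyr {G} : rename.

Definition symmetric {G : gyrogroup} (S : G -> Prop) : Prop :=
  forall s, S s -> S (ginv s).

Definition image {G : gyrogroup} (f : G -> G) (S : G -> Prop) : G -> Prop :=
  fun x => exists y, S y /\ f y = x.

Definition rcay_edge {G : gyrogroup} (S : G -> Prop) (u v : G) : Prop :=
  exists s, S s /\ v = gop u s.

Definition rcay_undirected {G : gyrogroup} (S : G -> Prop) : Prop :=
  forall u v, rcay_edge S u v -> rcay_edge S v u.


(* Proof idea.  Everything rests on one identity, valid in every gyrogroup:

     (u (+) s) (+) gyr[u,s]((-)s) = u,                              (return)

   i.e. from the vertex u (+) s of RCay(G,S) one gets back to u by adding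
   gyr[u,s]((-)s), and by left cancellation this is the ONLY element doing so.
   (1) If every gyr[g,s] (s in S) maps S onto S, then gyr[u,s]((-)s) lies in S
       because (-)s does, so every edge u -> u (+) s has a reverse edge.
   (2) If the graph is undirected, the edge g -> g (+) s has a reverse edge
       given by some t in S; uniqueness forces t = gyr[g,s]((-)s)
       = (-)gyr[g,s](s), and symmetry of S then yields gyr[g,s](s) in S. *)

Section GyrogroupFacts.
Variable G : gyrogroup.

(* Left cancellation: a (+) t = a (+) t' implies t = t'.  Multiply on the
   left by (-)a and use left gyroassociativity and injectivity of gyr. *)
Lemma gop_lcancel (a t t' : G) : gop a t = gop a t' -> t = t'.
Proof.
  intro E.
  assert (E' : gop (ginv a) (gop a t) = gop (ginv a) (gop a t')) by now rewrite E.
  rewrite !gyr_assoc, ginv_l, !gid_l in E'.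
  exact (gyr_inj _ _ _ _ _ E').
Qed.

(* Automorphisms fix the identity: gyr[x,y](e) is a two-sided identity,
   since gyr[x,y] is surjective and additive. *)
Lemma gyr_gid (x y : G) : gyr x y gid = gid.
Proof.
  apply gid_unique; intro b.
  destruct (gyr_surj _ x y b) as [a <-].
  now rewrite <- !gyr_morph, gid_l, gid_r.
Qed.

Lemma gyr_ginv (x y a : G) : gyr x y (ginv a) = ginv (gyr x y a).
Proof.
  apply ginv_unique; rewrite <- gyr_morph, ?ginv_l, ?ginv_r; apply gyr_gid.
Qed.

Lemma ginvK (x : G) : ginv (ginv x) = x.
Proof. symmetry; apply ginv_unique; [apply ginv_r | apply ginv_l]. Qed.

Lemma gop_return (u s : G) : gop (gop u s) (gyr u s (ginv s)) = u.
Proof. now rewrite <- gyr_assoc, ginv_r, gid_r. Qed.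

Lemma return_step_unique (u s t : G) :
  gop (gop u s) t = u -> t = ginv (gyr u s s).
Proof.
  intro E.
  rewrite <- gyr_ginv.
  apply (gop_lcancel (gop u s)).
  now rewrite E, gop_return.
Qed.

End GyrogroupFacts.

Lemma rcay_undirected_of_gyr_invariant (G : gyrogroup) (S : G -> Prop) :
  symmetric S ->
  (forall (g s : G), S s -> forall x, image (gyr g s) S x <-> S x) ->
  rcay_undirected S.
Proof.
  intros Hsym Hinv u v [s [Hs ->]].
  exists (gyr u s (ginv s)); split.
  - apply (Hinv u s Hs). exists (ginv s). split; [now apply Hsym | reflexivity].
  - symmetry; apply gop_return.
Qed.

Lemma gyr_self_mem_of_rcay_undirected (G : gyrogroup) (S : G -> Prop) :
  symmetric S -> rcay_undirected S ->
  forall (g s : G), S s -> S (gyr g s s).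
Proof.
  intros Hsym Hund g s Hs.
  destruct (Hund g (gop g s)) as [t [Ht Eback]].
  - exists s; split; [exact Hs | reflexivity].
  - assert (Et : t = ginv (gyr g s s))
      by (apply return_step_unique; now symmetry).
    rewrite <- (ginvK G (gyr g s s)), <- Et.
    now apply Hsym.
Qed.

Theorem mainTheorem3 (G : gyrogroup) (S : G -> Prop)
  (HSe : ~ S gid) (Hsym : symmetric S) :
  ((forall (g s : G), S s -> forall x, image (gyr g s) S x <-> S x) ->
     rcay_undirected S)
  /\
  (rcay_undirected S -> forall (g s : G), S s -> S (gyr g s s)).
Proof.
  split.
  - exact (rcay_undirected_of_gyr_invariant G S Hsym).
  - exact (gyr_self_mem_of_rcay_undirected G S Hsym).
Qed.
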